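(* Let $k\ge2$ and $r\ge0$, and set $\alpha=1-2^{-k}$ and $$\beta=\sum_{j=1}^k\frac{j}{2^j}+\frac{k+1}{2^k}\;\Big(=2-\frac1{2^k}\Big).$$ Let $X$ be a strongly-stable sequence with respect to the $(k,r)$-tree $T_r$ that is a whole multiple of its atomic sequence. Then $$\hat c(GF,X,T_r)=2^k\beta(1-\alpha^r)+\alpha^r.$$ In asymptotic terms, $\hat c(GF,X,T_r)=\Theta(2^k(1-\alpha^r))$.
   Context: Binary search tree model. An algorithm $A$ serves a query sequence $X=[x_1,\dots,x_m]$ from an initial BST $T_0$. Before serving $x_t$ it holds a BST $T_{t-1}$; it searches $x_t$ from the root and may then restructure the tree by rotations into $T_t$. Let $P_t$ be the set of nodes on the root-to-$x_t$ path of $T_{t-1}$, and let $U_t$ be the node set of the minimal subtree containing all edges rotated in transforming $T_{t-1}$ into $T_t$. The cost at time $t$ is $|P_t\cup U_t|$, and $\hat c(A,X,T_0)$ is the total cost divided by $m$. Greedy Future ($GF$). After finding $x_t$ in $T_{t-1}$, let $v_1<\dots<v_k$ be the keys on the root-to-$x_t$ path, set $v_0=-\infty$ and $v_{k+1}=+\infty$, and let $R_0,\dots,R_k$ be the subtrees hanging off this path. For each $i$, $\tau(v_i)$ is the smallest $s>t$ with $x_s\in(v_{i-1},v_{i+1})$, or $+\infty$ if there is none. $GF$ rearranges $v_1,\dots,v_k$ as a treap: a BST in key order and a heap in $\tau$, with the smallest $\tau$ at the top. Ties in $\tau$ are broken in favor of the node of smaller depth in $T_{t-1}$. It then reattaches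 $R_0,\dots,R_k$ unchanged at their unique positions, giving $T_t$. $(k,r)$-trees. Let $k\ge2$ and $r\ge0$ be integers. $T_0$ is a single node. For $r\ge1$, $T_r$ has $k$ trunk nodes $w_1,\dots,w_k$: $w_1$ is the root, $w_2$ is the right child of $w_1$, and $w_{j+1}$ is the left child of $w_j$ for $2\le j\le k-1$. The left child of $w_k$ is a single leaf (the actual leaf). Each of the remaining $k$ child positions of trunk nodes (the left child of $w_1$ and the right child of $w_j$ for $2\le j\le k$) is the root of a copy of $T_{r-1}$. Keys are $1,\dots,|T_r|$ in symmetric order. Stable sequences. Let $T$ be a full binary search tree, and let $X$ be a query sequence consisting only of keys stored at leaves of $T$. For an inner node $v$, let $X_v$ be the subsequence of $X$ consisting of the queries to keys in the subtree of $v$. The node $v$ is strongly-stable if consecutive queries of $X_v$ alternate between the left and right subtrees of $v$. $X$ is strongly-stable if every inner node of $T$ is strongly-stable. The atomic sequence is the shortest such sequence all of whose repetitions are again strongly-stable for $T$. $X$ is a whole multiple of it if it is a concatenation of copies of it. *)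

From mathcomp Require Import all_boot all_order all_algebra.
Set Implicit Arguments. Unset Strict Implicit. Unset Printing Implicit Defensive.
Import Order.TTheory GRing.Theory Num.Theory.

Inductive tree : Type :=
| Leaf : tree
| Node : tree -> nat -> tree -> tree.

Definition is_empty (T : tree) : bool := if T is Leaf then true else false.

Fixpoint keys (T : tree) : seq nat :=
  match T with
  | Leaf => [::]
  | Node l v r => keys l ++ v :: keys r
  end.

Fixpoint leaf_keys (T : tree) : seq nat :=
  match T with
  | Leaf => [::]
  | Node l v r =>
      if is_empty l && is_empty r then [:: v] else leaf_keys l ++ leaf_keys r
  end.

Fixpoint path_len (T : tree) (x : nat) : nat :=
  match T with
  | Leaf => 0
  | Node l v r =>
      (if x < v then path_len l x else if v < x then path_len r x else 0).+1
  end.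

(* In-order sequence of the pieces obtained by cutting the search path to x:
   hanging subtrees R_0,...,R_k (inl) interleaved with the path nodes
   v_1 < ... < v_k (inr (key, depth in the current tree)). *)
Fixpoint pieces (d : nat) (T : tree) (x : nat) : seq (tree + (nat * nat)) :=
  match T with
  | Leaf => [:: inl Leaf]
  | Node l v r =>
      if x < v then pieces d.+1 l x ++ [:: inr (v, d); inl r]
      else if v < x then [:: inl l; inr (v, d)] ++ pieces d.+1 r x
      else [:: inl l; inr (v, d); inl r]
  end.

Definition get_tree (p : tree + (nat * nat)) : option tree :=
  if p is inl t then Some t else None.
Definition get_node (p : tree + (nat * nat)) : option (nat * nat) :=
  if p is inr n then Some n else None.

(* open interval (lo, hi), None = -oo resp. +oo *)
Definition in_open (lo hi : option nat) (y : nat) : bool :=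
  (if lo is Some a then a < y else true) && (if hi is Some b then y < b else true).

(* A path node annotated as (key, depth, tau); tau is the 0-based index in
   the future query sequence x_{t+1}, x_{t+2}, ... of the first query in the
   interval (v_{i-1}, v_{i+1}); it equals the length of the future sequence
   (larger than every real index) when there is none, playing the role of +oo. *)
Definition nkey (n : nat * nat * nat) : nat := n.1.1.
Definition ndepth (n : nat * nat * nat) : nat := n.1.2.
Definition ntau (n : nat * nat * nat) : nat := n.2.

(* a has strictly higher treap priority than b: smaller tau, ties broken in
   favour of smaller depth in T_{t-1} *)
Definition prec (a b : nat * nat * nat) : bool :=
  (ntau a < ntau b) || ((ntau a == ntau b) && (ndepth a < ndepth b)).

Fixpoint amin (s : seq (nat * nat * nat)) : nat :=
  match s with
  | [::] => 0
  | x :: s' =>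
      if s' is [::] then 0
      else let j := amin s' in if prec (nth x s' j) x then j.+1 else 0
  end.

(* treap on the (key-sorted) nodes ns with the subtrees ss (size ns + 1 of
   them) reattached at their positions *)
Fixpoint build (fuel : nat) (ns : seq (nat * nat * nat)) (ss : seq tree) : tree :=
  match fuel with
  | 0 => head Leaf ss
  | f.+1 =>
      match ns with
      | [::] => head Leaf ss
      | n0 :: _ =>
          let i := amin ns in
          Node (build f (take i ns) (take i.+1 ss))
               (nkey (nth n0 ns i))
               (build f (drop i.+1 ns) (drop i.+1 ss))
      end
  end.

Definition gf_step (future : seq nat) (T : tree) (x : nat) : tree :=
  let ps := pieces 0 T x in
  let subs := pmap get_tree ps in
  let nds := pmap get_node ps in
  let vs := map fst nds in
  let los := None :: map Some vs in
  let his := map Some (behead vs) ++ [:: None] in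
  let ns := [seq (nd, find (in_open lohi.1 lohi.2) future)
            | '(nd, lohi) <- zip nds (zip los his)] in
  build (size ns) ns subs.

(* total cost sum_t |P_t ∪ U_t| = sum_t |P_t| of GF serving X from T *)
Fixpoint gf_total (T : tree) (X : seq nat) : nat :=
  match X with
  | [::] => 0
  | x :: X' => path_len T x + gf_total (gf_step X' T x) X'
  end.

Definition gf_avg_cost (T : tree) (X : seq nat) : rat :=
  ((gf_total T X)%:R / (size X)%:R)%R.

Definition leaf0 : tree := Node Leaf 0 Leaf.

Fixpoint trunk (m : nat) (C : tree) : tree :=
  match m with
  | 0 => leaf0
  | m'.+1 => Node (trunk m' C) 0 C
  end.

Fixpoint kr_shape (k r : nat) : tree :=
  match r with
  | 0 => leaf0
  | r'.+1 => let C := kr_shape k r' in Node C 0 (trunk k.-1 C)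
  end.

Fixpoint label (T : tree) (n : nat) : tree * nat :=
  match T with
  | Leaf => (Leaf, n)
  | Node l _ r =>
      let (l', n1) := label l n in
      let (r', n2) := label r n1.+1 in
      (Node l' n1 r', n2)
  end.

Definition kr_tree (k r : nat) : tree := (label (kr_shape k r) 1).1.

Definition alt (l r : tree) (a b : nat) : bool :=
  ((a \in keys l) && (b \in keys r)) || ((a \in keys r) && (b \in keys l)).

Fixpoint nodes_stable (T : tree) (X : seq nat) : bool :=
  match T with
  | Leaf => true
  | Node l v r =>
      (is_empty l && is_empty r) ||
      [&& sorted (alt l r) [seq x <- X | x \in keys T],
          nodes_stable l X & nodes_stable r X]
  end.

Definition strongly_stable (T : tree) (X : seq nat) : bool :=
  all (fun x => x \in leaf_keys T) X && nodes_stable T X.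

Definition repeat_seq (n : nat) (A : seq nat) : seq nat := flatten (nseq n A).

Definition all_reps_stable (T : tree) (A : seq nat) : Prop :=
  forall n, 0 < n -> strongly_stable T (repeat_seq n A).

Definition is_atomic (T : tree) (A : seq nat) : Prop :=
  [/\ 0 < size A, all_reps_stable T A &
      forall B, 0 < size B -> all_reps_stable T B -> size A <= size B].

Definition whole_multiple_of_atomic (T : tree) (X : seq nat) : Prop :=
  exists A n, [/\ is_atomic T A, 0 < n & X = repeat_seq n A].

Definition alpha (k : nat) : rat := (1 - 1 / 2%:R ^+ k)%R.
Definition beta (k : nat) : rat :=
  (\sum_(1 <= j < k.+1) j%:R / 2%:R ^+ j + k.+1%:R / 2%:R ^+ k)%R.

(* On a strongly-stable sequence Greedy Future never restructures the tree. Take a node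
   v on the search path to x. The next query below v after x goes to the child of v off
   the path, whose keys all lie between the key-order neighbours of v on the path, while
   every key of the tree in that interval lies below v. So tau(v) is the time of the next query below
   v; it grows with depth, ties are broken by depth, and the treap GF builds is the tree
   it started from. The total cost is then the static cost. Below an inner node queries
   alternate between the two children, and over a whole number of atomic periods the
   two children receive equally many, so the cost per query satisfies
   c(leaf) = 1 and c(Node l v r) = 1 + (c(l) + c(r)) / 2. For (k,r)-trees this gives
   c(T_0) = 1 and c(T_r) = 2 + c(T_{r-1}) - (1 + c(T_{r-1})) / 2^k, an affine recursion
   with ratio alpha and fixed point 2^k beta = 2^(k+1) - 1. *)

From HB Require Import structures.
From mathcomp Require Import all_boot all_order all_algebra.
From mathcomp Require Import zify ring.
Import GRing.Theory Num.Theory.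
Set Implicit Arguments. Unset Strict Implicit. Unset Printing Implicit Defensive.

Definition bst (T : tree) : bool := pairwise ltn (keys T).

Lemma bst_node_inv l v r : bst (Node l v r) ->
  [/\ bst l, bst r, {in keys l, forall y, y < v} & {in keys r, forall y, v < y}].
Proof.
rewrite /bst /= pairwise_cat pairwise_cons => /and3P [/allrelP lv -> /andP [/allP vr ->]].
by split=> // y yl; apply: lv; rewrite ?mem_head.
Qed.

Lemma bst_node_disjoint l v r y : bst (Node l v r) -> y \in keys l -> y \notin keys r.
Proof.
case/bst_node_inv=> _ _ ltl ltr yl; apply/negP=> /ltr.
by rewrite ltnNge ltnW ?ltl.
Qed.

Lemma mem_bst_node l v r y : bst (Node l v r) -> y \in keys (Node l v r) ->
  (y \in keys l) = (y < v) /\ (y \in keys r) = (v < y).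
Proof.
case/bst_node_inv=> _ _ ltl ltr; rewrite /= mem_cat inE.
case/or3P=> [yl|/eqP->|yr].
- have := ltl y yl; rewrite yl; split=> //; apply/idP/idP=> [/ltr|]; lia.
- by rewrite ltnn; split; apply/negbTE/negP; [move/ltl | move/ltr]; rewrite ltnn.
- have := ltr y yr; rewrite yr; split=> //; apply/idP/idP=> [/ltl|]; lia.
Qed.

Lemma mem_leaf_keys T y : y \in leaf_keys T -> y \in keys T.
Proof.
elim: T => [|l IHl v r IHr] //=; case: ifP => _.
  by rewrite inE => /eqP ->; rewrite mem_cat mem_head orbT.
by rewrite !mem_cat inE => /orP [/IHl -> | /IHr ->]; rewrite ?orbT.
Qed.

Fixpoint tree_eqb (a b : tree) : bool :=
  match a, b with
  | Leaf, Leaf => true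
  | Node l v r, Node l' v' r' => [&& tree_eqb l l', v == v' & tree_eqb r r']
  | _, _ => false
  end.

Lemma tree_eqP : Equality.axiom tree_eqb.
Proof.
elim=> [|l IHl v r IHr] [|l' v' r'] /=; try by constructor.
case: (IHl l') => [<-|?]; last by constructor; case.
case: eqP => [<-|?]; last by constructor; case.
by case: (IHr r') => [<-|?]; constructor; [|case].
Qed.

HB.instance Definition _ := hasDecEq.Build tree tree_eqP.

Lemma nodes_stable_inner l v r X : ~~ (is_empty l && is_empty r) ->
  nodes_stable (Node l v r) X =
  [&& sorted (alt l r) [seq y <- X | y \in keys (Node l v r)],
      nodes_stable l X & nodes_stable r X].
Proof. by move=> /negbTE /= ->. Qed.

Lemma nodes_stable_behead T x Y : nodes_stable T (x :: Y) -> nodes_stable T Y.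
Proof.
elim: T => [|l IHl v r IHr] //=.
case: (_ && _) => //= /and3P [s sl sr]; rewrite IHl // IHr // !andbT.
by move: s; case: ifP => _ // /path_sorted.
Qed.

Lemma nodes_stable_filter T (P : pred nat) Y : {subset keys T <= P} ->
  nodes_stable T Y -> nodes_stable T [seq y <- Y | P y].
Proof.
elim: T => [|l IHl v r IHr] //= sub.
case: (_ && _) => //= /and3P [s sl sr].
rewrite IHl ?IHr //; last 2 first.
- by move=> y yr; apply: sub; rewrite mem_cat inE yr !orbT.
- by move=> y yl; apply: sub; rewrite mem_cat yl.
rewrite -filter_predI !andbT; apply: etrans s; congr sorted.
by apply: eq_filter => y /=; case: (boolP (y \in _)) => //= /sub.
Qed.

Lemma stable_next_alt l v r x F h t : ~~ (is_empty l && is_empty r) ->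
  x \in keys (Node l v r) -> nodes_stable (Node l v r) (x :: F) ->
  [seq y <- F | y \in keys (Node l v r)] = h :: t -> alt l r x h.
Proof.
move=> inner xT; rewrite nodes_stable_inner // /= xT => /and3P [s _ _] eF.
by move: s; rewrite eF /= => /andP [].
Qed.

Fixpoint path_nodes (d : nat) (T : tree) (x : nat) : seq (nat * nat * tree) :=
  if T is Node l v r then
    if x < v then rcons (path_nodes d.+1 l x) (v, d, T)
    else if v < x then (v, d, T) :: path_nodes d.+1 r x
    else [:: (v, d, T)]
  else [::].

Lemma pieces_nodes d T x : pmap get_node (pieces d T x) = map fst (path_nodes d T x).
Proof.
elim: T d => [|l IHl v r IHr] d //=; case: ifP => _.
  by rewrite pmap_cat IHl map_rcons cats1.
by case: ifP => _ //=; rewrite IHr.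
Qed.

Lemma size_pieces_trees d T x :
  size (pmap get_tree (pieces d T x)) = (size (path_nodes d T x)).+1.
Proof.
elim: T d => [|l IHl v r IHr] d //=; case: ifP => _.
  by rewrite pmap_cat size_cat IHl size_rcons addn1.
by case: ifP => _ //=; rewrite IHr.
Qed.

Lemma path_nodes_key d T x w : w \in path_nodes d T x -> w.1.1 \in keys T.
Proof.
elim: T d => [|l IHl v r IHr] d //=.
have root : v \in keys l ++ v :: keys r by rewrite mem_cat mem_head orbT.
case: ifP => _.
  by rewrite mem_rcons inE => /orP [/eqP -> //|/IHl kl]; rewrite mem_cat kl.
case: ifP => _; last by rewrite inE => /eqP ->.
by rewrite inE => /orP [/eqP -> //|/IHr kr]; rewrite mem_cat inE kr !orbT.
Qed.

Lemma path_nodes_depth d T x w : w \in path_nodes d T x -> d <= w.1.2.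
Proof.
elim: T d => [|l IHl v r IHr] d //=.
case: ifP => _; first by rewrite mem_rcons inE => /orP [/eqP -> //|/IHl /=]; lia.
case: ifP => _; last by rewrite inE => /eqP ->.
by rewrite inE => /orP [/eqP -> //|/IHr /=]; lia.
Qed.

Lemma path_nodes_subtree d T x w : w \in path_nodes d T x -> {subset keys w.2 <= keys T}.
Proof.
elim: T d => [|l IHl v r IHr] d //=.
have subl : {subset keys l <= keys l ++ v :: keys r} by move=> y yl; rewrite mem_cat yl.
have subr : {subset keys r <= keys l ++ v :: keys r}.
  by move=> y yr; rewrite mem_cat inE yr !orbT.
case: ifP => _; first by rewrite mem_rcons inE => /orP [/eqP -> //| /IHl s y /s /subl].
case: ifP => _; last by rewrite inE => /eqP ->.
by rewrite inE => /orP [/eqP -> //| /IHr s y /s /subr].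
Qed.

Lemma path_nodes_nested d T x a b : a \in path_nodes d T x -> b \in path_nodes d T x ->
  a.1.2 < b.1.2 -> {subset keys b.2 <= keys a.2}.
Proof.
elim: T d => [|l IHl v r IHr] d //=.
case: ifP => _.
  rewrite !mem_rcons !inE => /orP [/eqP ->|al] /orP [/eqP ->|bl] /=.
  - by rewrite ltnn.
  - by move=> _ y /(path_nodes_subtree bl) yl; rewrite mem_cat yl.
  - by move=> lt; have := ltn_trans lt (path_nodes_depth al); rewrite ltnn.
  - exact: IHl al bl.
case: ifP => _; last by rewrite !inE => /eqP -> /eqP ->; rewrite ltnn.
rewrite !inE => /orP [/eqP ->|ar] /orP [/eqP ->|br] /=.
- by rewrite ltnn.
- by move=> _ y /(path_nodes_subtree br) yr; rewrite mem_cat inE yr !orbT.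
- by move=> lt; have := ltn_trans lt (path_nodes_depth ar); rewrite ltnn.
- exact: IHr ar br.
Qed.

Lemma amin_cons n s : s != [::] ->
  amin (n :: s) = if prec (nth n s (amin s)) n then (amin s).+1 else 0.
Proof. by case: s. Qed.

Lemma amin_lt s : s != [::] -> amin s < size s.
Proof.
elim: s => [|n s IH] // _; case: s IH => [|m s] // IH.
by rewrite amin_cons //; case: ifP => _ //; rewrite ltnS IH.
Qed.

Lemma amin_rcons s n : {in s, forall y, prec n y} -> amin (rcons s n) = size s.
Proof.
elim: s => [|a s IH] // hs; rewrite rcons_cons amin_cons; last by case: s {IH hs}.
rewrite IH => [|y ys]; last by apply: hs; rewrite inE ys orbT.
by rewrite nth_rcons ltnn eqxx hs ?mem_head.
Qed.

Lemma amin_head n s : {in s, forall y, ~~ prec y n} -> amin (n :: s) = 0.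
Proof.
case: s => [|a s] // hs; rewrite amin_cons // (negbTE (hs _ _)) //.
exact/mem_nth/amin_lt.
Qed.

Lemma build_nil f t : build f [::] [:: t] = t.
Proof. by case: f. Qed.

Lemma build_S f ns ss n0 : ns != [::] ->
  build f.+1 ns ss =
  Node (build f (take (amin ns) ns) (take (amin ns).+1 ss)) (nkey (nth n0 ns (amin ns)))
       (build f (drop (amin ns).+1 ns) (drop (amin ns).+1 ss)).
Proof. by case: ns => [|n ns] // _; rewrite /= (set_nth_default n n0) // (@amin_lt (n :: ns)).
Qed.

Lemma build_rcons_root f s ss n t : {in s, forall y, prec n y} ->
  size ss = (size s).+1 ->
  build f.+1 (rcons s n) (rcons ss t) = Node (build f s ss) (nkey n) t.
Proof.
move=> hs hss; rewrite (build_S _ _ n) ?amin_rcons //; last by case: s {hs hss}.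
rewrite -!cats1 take_size_cat // nth_cat ltnn subnn drop_oversize ?size_cat ?addn1 //.
by rewrite -hss take_size_cat // drop_size_cat // build_nil.
Qed.

Lemma build_cons_root f s ss n t : {in s, forall y, ~~ prec y n} ->
  build f.+1 (n :: s) (t :: ss) = Node t (nkey n) (build f s ss).
Proof. by move=> hs; rewrite (build_S _ _ n) // amin_head //= take0 !drop0 build_nil. Qed.

Lemma prec_shallower a b : ndepth a < ndepth b -> ntau a <= ntau b -> prec a b.
Proof. rewrite /prec; lia. Qed.

Lemma nprec_deeper a b : ndepth a < ndepth b -> ntau a <= ntau b -> ~~ prec b a.
Proof. rewrite /prec; lia. Qed.

Lemma build_path_nodes T d x (tau : nat * nat * tree -> nat) f :
  {in path_nodes d T x &, forall a b, a.1.2 < b.1.2 -> tau a <= tau b} ->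
  size (path_nodes d T x) <= f ->
  build f [seq (w.1, tau w) | w <- path_nodes d T x] (pmap get_tree (pieces d T x)) = T.
Proof.
elim: T d f => [|l IHl v r IHr] d f; first by rewrite /= build_nil.
simpl path_nodes; simpl pieces.
set root := (v, d, Node l v r).
have deeper (W : seq (nat * nat * tree)) : (forall w, w \in W -> d < w.1.2) ->
    {in root :: W &, forall a b, a.1.2 < b.1.2 -> tau a <= tau b} ->
    {in [seq (w.1, tau w) | w <- W], forall y, prec (root.1, tau root) y &&
                                                 ~~ prec y (root.1, tau root)}.
  move=> dW mono _ /mapP [w wW ->]; have dw := dW w wW.
  have tw : tau root <= tau w by apply: mono; rewrite ?mem_head ?inE ?wW ?orbT.
  by rewrite prec_shallower ?nprec_deeper.
case: f => [|f]; first by case: ifP; [rewrite size_rcons | case: ifP].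
case: ifP => _.
  rewrite map_rcons pmap_cat -[pmap get_tree [:: _; _]]/[:: r] cats1 size_rcons => mono sz.
  have monol : {in path_nodes d.+1 l x &, forall a b, a.1.2 < b.1.2 -> tau a <= tau b}.
    by move=> a b al bl; apply: mono; rewrite mem_rcons inE ?al ?bl orbT.
  rewrite build_rcons_root ?size_map ?size_pieces_trees ?IHl //.
  have monor : {in root :: path_nodes d.+1 l x &, forall a b, a.1.2 < b.1.2 -> tau a <= tau b}.
    by move=> a b ha hb; apply: mono; rewrite mem_rcons.
  by move=> y /(deeper _ (fun w wl => path_nodes_depth wl) monor) /andP [].
case: ifP => _ mono sz.
  rewrite build_cons_root ?IHr //.
  - by move=> a b ar br; apply: mono; rewrite inE ?ar ?br orbT.
  - by move=> y /(deeper _ (fun w wr => path_nodes_depth wr) mono) /andP [].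
by rewrite build_cons_root // build_nil.
Qed.

Lemma find_filter_head (T : eqType) (P Q : pred T) s :
  {in s, forall y, P y -> Q y} ->
  (forall h t, [seq y <- s | Q y] = h :: t -> P h) -> find P s = find Q s.
Proof.
elim: s => [|y s IH] //= PQ hd; case Qy: (Q y).
  by rewrite (hd y [seq y <- s | Q y]) //= Qy.
have -> : P y = false by apply: contraFF Qy; apply: PQ; rewrite mem_head.
rewrite IH // => [z zs|h t eq]; first by apply: PQ; rewrite inE zs orbT.
by apply: (hd h t); rewrite /= Qy.
Qed.

Lemma leq_find (T : Type) (P Q : pred T) s : subpred P Q -> find Q s <= find P s.
Proof. by move=> PQ; elim: s => [|y s IH] //=; case Py: (P y); [rewrite PQ | case: (Q y)]. Qed.

Lemma in_open_trans_lo lo hi w y : in_open lo hi w -> in_open (Some w) hi y -> in_open lo hi y.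
Proof. by rewrite /in_open; case: lo => [?|]; case: hi => [?|] /=; lia. Qed.

Lemma in_open_trans_hi lo hi w y : in_open lo hi w -> in_open lo (Some w) y -> in_open lo hi y.
Proof. by rewrite /in_open; case: lo => [?|]; case: hi => [?|] /=; lia. Qed.

Lemma in_open_Some_lo lo hi w y : in_open lo hi y -> w < y -> in_open (Some w) hi y.
Proof. by rewrite /in_open /= => /andP [_ ->] ->. Qed.

Lemma in_open_Some_hi lo hi w y : in_open lo hi y -> y < w -> in_open lo (Some w) y.
Proof. by rewrite /in_open /= => /andP [-> _] ->. Qed.

Lemma find_open_keys (S F : seq nat) lo hi : {in S, forall y, in_open lo hi y} ->
  {in F, forall y, in_open lo hi y -> y \in S} -> find (in_open lo hi) F = find (mem S) F.
Proof. by move=> inS inF; apply: eq_in_find => y yF; apply/idP/idP => [/inF|/inS]; apply. Qed.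

Lemma find_open_root_left l v r x F lo hi a :
  bst (Node l v r) -> x \in keys l ->
  {in keys (Node l v r), forall y, in_open lo hi y} ->
  {in F, forall y, in_open lo hi y -> y \in keys (Node l v r)} ->
  nodes_stable (Node l v r) (x :: F) -> a \in lo :: map Some (keys l) ->
  find (in_open a hi) F = find (mem (keys (Node l v r))) F.
Proof.
move=> bT xl inT inF st /predU1P [-> | /mapP [w wl ->]]; first exact: find_open_keys.
have [_ _ ltl ltr] := bst_node_inv bT.
have wT : w \in keys (Node l v r) by rewrite /= mem_cat wl.
apply: find_filter_head => [y yF /(in_open_trans_lo (inT w wT))|h t hF]; first exact: inF.
have hT : h \in keys (Node l v r).
  by move: (mem_head h t); rewrite -hF mem_filter => /andP [].
have : alt l r x h.
  by apply: stable_next_alt st hF; [case: (l) xl | rewrite /= mem_cat xl].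
rewrite /alt xl (negbTE (bst_node_disjoint bT xl)) /= orbF => hr.
exact: in_open_Some_lo (inT h hT) (ltn_trans (ltl w wl) (ltr h hr)).
Qed.

Lemma find_open_root_right l v r x F lo hi b :
  bst (Node l v r) -> x \in keys r ->
  {in keys (Node l v r), forall y, in_open lo hi y} ->
  {in F, forall y, in_open lo hi y -> y \in keys (Node l v r)} ->
  nodes_stable (Node l v r) (x :: F) -> b \in hi :: map Some (keys r) ->
  find (in_open lo b) F = find (mem (keys (Node l v r))) F.
Proof.
move=> bT xr inT inF st /predU1P [-> | /mapP [w wr ->]]; first exact: find_open_keys.
have [_ _ ltl ltr] := bst_node_inv bT.
have wT : w \in keys (Node l v r) by rewrite /= mem_cat inE wr !orbT.
apply: find_filter_head => [y yF /(in_open_trans_hi (inT w wT))|h t hF]; first exact: inF.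
have hT : h \in keys (Node l v r).
  by move: (mem_head h t); rewrite -hF mem_filter => /andP [].
have : alt l r x h.
  by apply: stable_next_alt st hF; [case: (l); case: (r) xr | rewrite /= mem_cat inE xr !orbT].
have xl : x \in keys l = false by apply/negP => /(bst_node_disjoint bT); rewrite xr.
rewrite /alt xl xr /= => hl.
exact: in_open_Some_hi (inT h hT) (ltn_trans (ltl h hl) (ltr w wr)).
Qed.

Fixpoint bounds (lo : option nat) (vs : seq nat) (hi : option nat)
  : seq (option nat * option nat) :=
  if vs is v :: vs' then (lo, head hi (map Some vs')) :: bounds (Some v) vs' hi else [::].

Lemma size_bounds lo vs hi : size (bounds lo vs hi) = size vs.
Proof. by elim: vs lo => //= v vs IH lo; rewrite IH. Qed.

Lemma bounds_rcons lo vs v hi :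
  bounds lo (rcons vs v) hi = rcons (bounds lo vs (Some v)) (last lo (map Some vs), hi).
Proof. by elim: vs lo => [|a vs IH] lo //=; rewrite IH; case: vs {IH}. Qed.

Lemma zip_bounds (A : Type) (ns : seq A) lo vs hi : size ns = size vs ->
  zip ns (zip (lo :: map Some vs) (map Some (behead vs) ++ [:: hi])) =
  zip ns (bounds lo vs hi).
Proof.
elim: vs ns lo => [|v vs IH] [|n ns] lo //= [sz].
by case: vs IH sz => [|w vs] IH sz; [case: ns sz | rewrite -IH].
Qed.

Lemma last_Some_mem (ks S : seq nat) z : {subset ks <= S} ->
  last z (map Some ks) \in z :: map Some S.
Proof.
move=> sub; case/predU1P: (mem_last z (map Some ks)) => [-> | /mapP [k kk ->]].
  exact: mem_head.
by rewrite inE map_f ?sub ?orbT.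
Qed.

Lemma head_Some_mem (ks S : seq nat) z : {subset ks <= S} ->
  head z (map Some ks) \in z :: map Some S.
Proof.
by case: ks => [|k ks] sub; rewrite /= ?mem_head // inE (map_f Some) ?sub ?mem_head ?orbT.
Qed.

Lemma path_nodes_find_open T d x F lo hi :
  bst T -> x \in keys T -> {in keys T, forall y, in_open lo hi y} ->
  {in F, forall y, in_open lo hi y -> y \in keys T} -> nodes_stable T (x :: F) ->
  {in zip (path_nodes d T x) (bounds lo [seq w.1.1 | w <- path_nodes d T x] hi),
   forall p, find (in_open p.2.1 p.2.2) F = find (mem (keys p.1.2)) F}.
Proof.
elim: T d lo hi => [|l IHl v r IHr] d lo hi bT xT inT inF st //=.
have [bl br ltl ltr] := bst_node_inv bT; have [xl xr] := mem_bst_node bT xT.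
have vT : v \in keys (Node l v r) by rewrite /= mem_cat mem_head orbT.
have keys_sub c : {subset [seq w.1.1 | w <- path_nodes d.+1 c x] <= keys c}.
  by move=> k /mapP [w /path_nodes_key wc ->].
case: ifP => xv.
  have {xv}xl : x \in keys l by rewrite xl.
  have nl : ~~ (is_empty l && is_empty r) by case: (l) xl.
  move: (st); rewrite nodes_stable_inner // => /and3P [_ stl _] p.
  rewrite map_rcons bounds_rcons zip_rcons ?size_bounds ?size_map // mem_rcons inE.
  case/orP=> [/eqP -> | pl].
    by rewrite (find_open_root_left bT xl inT inF st (last_Some_mem lo (keys_sub l))).
  apply: (IHl d.+1 lo (Some v)) => // y.
    by move=> yl; apply: in_open_Some_hi (ltl y yl); apply: inT; rewrite /= mem_cat yl.
  move=> yF yo; have yT := inF y yF (in_open_trans_hi (inT v vT) yo).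
  by rewrite (mem_bst_node bT yT).1; move: yo; rewrite /in_open /= => /andP [].
case: ifP => vx; last first.
  by move=> p; rewrite inE => /eqP -> /=; apply: find_open_keys.
have {vx}xr : x \in keys r by rewrite xr.
have nl : ~~ (is_empty l && is_empty r) by case: (l); case: (r) xr.
move: (st); rewrite nodes_stable_inner // => /and3P [_ _ str] p /=.
rewrite inE => /orP [/eqP -> | pr].
  by rewrite (find_open_root_right bT xr inT inF st (head_Some_mem hi (keys_sub r))).
apply: (IHr d.+1 (Some v) hi) => // y.
  by move=> yr; apply: in_open_Some_lo (ltr y yr); apply: inT; rewrite /= mem_cat inE yr !orbT.
move=> yF yo; have yT := inF y yF (in_open_trans_lo (inT v vT) yo).
by rewrite (mem_bst_node bT yT).2; move: yo; rewrite /in_open /= => /andP [].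
Qed.

Lemma map_zip_fst (A B C : eqType) (D : Type) (W : seq (A * B)) (L : seq C)
    (g : C -> D) (t : A * B -> D) :
  size L = size W -> {in zip W L, forall p, g p.2 = t p.1} ->
  [seq (let '(a, c) := p in (a, g c)) | p <- zip (map fst W) L] = [seq (w.1, t w) | w <- W].
Proof.
elim: W L => [|w W IH] [|c L] //= [sz] eq.
by rewrite (eq (w, c)) ?mem_head // IH // => p pWL; apply: eq; rewrite inE pWL orbT.
Qed.

Lemma gf_step_stable T x F : bst T -> x \in keys T -> {subset F <= keys T} ->
  nodes_stable T (x :: F) -> gf_step F T x = T.
Proof.
move=> bT xT FT st; rewrite /gf_step pieces_nodes zip_bounds ?size_map // -map_comp.
rewrite (@map_zip_fst _ _ _ _ _ _ (fun c => find (in_open c.1 c.2) F)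
                      (fun w => find (mem (keys w.2)) F)).
- apply: build_path_nodes; last by rewrite size_zip size_bounds !size_map minnn.
  by move=> a b aW bW ab; apply/leq_find/(path_nodes_nested aW bW ab).
- by rewrite size_bounds size_map.
exact: (path_nodes_find_open (d := 0) (lo := None) (hi := None) bT xT (fun _ _ => isT)
         (fun y yF _ => FT y yF) st).
Qed.

Definition static_cost (T : tree) (s : seq nat) : nat := sumn (map (path_len T) s).

Lemma gf_total_stable T X : bst T -> {subset X <= keys T} -> nodes_stable T X ->
  gf_total T X = static_cost T X.
Proof.
move=> bT; elim: X => [|x X IH] //= XT st.
have XT' : {subset X <= keys T} by move=> y yX; apply: XT; rewrite inE yX orbT.
by rewrite gf_step_stable ?XT ?mem_head // IH // (nodes_stable_behead st).
Qed.

Lemma static_cost_node l v r s : bst (Node l v r) ->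
  {in s, forall y, (y \in keys l) || (y \in keys r)} ->
  static_cost (Node l v r) s = size s + static_cost l [seq y <- s | y \in keys l]
                                      + static_cost r [seq y <- s | y \in keys r].
Proof.
move=> bT; have [_ _ ltl ltr] := bst_node_inv bT; rewrite /static_cost.
elim: s => [|y s IH] //= sT; rewrite IH => [|z zs]; last by apply: sT; rewrite inE zs orbT.
case/orP: (sT y (mem_head y s)) => [yl | yr].
  by rewrite yl (negbTE (bst_node_disjoint bT yl)) ltl //=; lia.
have yl : y \in keys l = false by apply/negP => /(bst_node_disjoint bT); rewrite yr.
by rewrite yl yr ltr // ltnNge ltnW ?ltr //=; lia.
Qed.

Lemma size_count_disjoint (P Q : pred nat) s : {in s, forall y, P y || Q y} ->
  (forall y, P y -> ~~ Q y) -> size s = count P s + count Q s.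
Proof.
move=> PQ disj; elim: s PQ => [|y s IH] //= PQ.
rewrite IH => [|z zs]; last by apply: PQ; rewrite inE zs orbT.
case/orP: (PQ y (mem_head y s)) => [Py|Qy].
  by rewrite Py (negbTE (disj y Py)) /=; lia.
have -> : P y = false by apply: contraTF Qy => /disj.
by rewrite Qy /=; lia.
Qed.

Lemma count_alt_bound l r s : (forall y, y \in keys l -> y \notin keys r) ->
  sorted (alt l r) s ->
  count (mem (keys l)) s <= (count (mem (keys r)) s).+1 /\
  count (mem (keys r)) s <= (count (mem (keys l)) s).+1.
Proof.
move=> disj; have [n] := ubnP (size s); elim: n s => // n IH [|a [|b s]] //= sz.
  by case: (a \in keys l); case: (a \in keys r).
case/andP=> ab /path_sorted srt; have [|] := IH s _ srt; first lia.
have disj' y : y \in keys r -> y \notin keys l by apply: contraL => /disj.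
have [] : (a \in keys l) + (b \in keys l) = 1 /\ (a \in keys r) + (b \in keys r) = 1.
  case/orP: ab => /andP [ac bc].
    by rewrite ac bc (negbTE (disj a ac)) (negbTE (disj' b bc)).
  by rewrite ac bc (negbTE (disj b bc)) (negbTE (disj' a ac)).
by rewrite !addnA => -> -> h1 h2; rewrite !add1n !ltnS.
Qed.

Lemma count_alt_periodic l r s : (forall y, y \in keys l -> y \notin keys r) ->
  sorted (alt l r) (s ++ s) -> count (mem (keys l)) s = count (mem (keys r)) s.
Proof. by move=> disj /(count_alt_bound disj); rewrite !count_cat; lia. Qed.

Fixpoint stable_rate (T : tree) : rat :=
  match T with
  | Leaf => 0 (* irrelevant: an empty child receives no queries *)
  | Node l _ r =>
      if is_empty l && is_empty r then 1
      else 1 + (stable_rate l + stable_rate r) / 2%:R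
  end%R.

Lemma static_cost_periodic T s : bst T -> {subset s <= leaf_keys T} ->
  nodes_stable T (s ++ s) -> ((static_cost T s)%:R = (size s)%:R * stable_rate T :> rat)%R.
Proof.
elim: T s => [|l IHl v r IHr] s bT sT st.
  by case: s {st} sT => // y s /(_ y (mem_head _ _)).
have [bl br _ _] := bst_node_inv bT.
have disj y : y \in keys l -> y \notin keys r := bst_node_disjoint bT.
case: (boolP (is_empty l && is_empty r)) => [|inner].
  case: l r {IHl IHr bl br disj st bT} sT => [|? ? ?] [|? ? ?] //= sT _; rewrite /static_cost.
  have -> : map (path_len (Node Leaf v Leaf)) s = map (fun=> 1) s.
    by apply/eq_in_map => y /sT; rewrite inE => /eqP ->; rewrite /= ltnn.
  by rewrite mulr1; congr (_%:R)%R; elim: (s) => //= _ t ->.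
move: sT st; rewrite nodes_stable_inner // /= (negbTE inner) => sT /and3P [alt_s stl str].
have s_lr : {in s, forall y, (y \in keys l) || (y \in keys r)}.
  move=> y /sT; rewrite mem_cat.
  by case/orP=> [/mem_leaf_keys -> | /mem_leaf_keys ->]; rewrite ?orbT.
have stc c : nodes_stable c (s ++ s) ->
    nodes_stable c ([seq y <- s | y \in keys c] ++ [seq y <- s | y \in keys c]).
  by rewrite -filter_cat; apply: nodes_stable_filter.
have sl : {subset [seq y <- s | y \in keys l] <= leaf_keys l}.
  move=> y; rewrite mem_filter => /andP [yl /sT]; rewrite mem_cat => /orP [//|/mem_leaf_keys].
  by move/negP: (disj y yl).
have sr : {subset [seq y <- s | y \in keys r] <= leaf_keys r}.
  move=> y; rewrite mem_filter => /andP [yr /sT]; rewrite mem_cat => /orP [/mem_leaf_keys|//].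
  by move=> /disj; rewrite yr.
have /all_filterP all_s : all (fun y => y \in keys l ++ v :: keys r) (s ++ s).
  rewrite all_cat andbb; apply/allP => y /s_lr.
  by rewrite mem_cat inE => /orP [] ->; rewrite ?orbT.
rewrite all_s in alt_s; have cnt := count_alt_periodic disj alt_s.
rewrite static_cost_node // !natrD (IHl _ bl sl (stc l stl)) (IHr _ br sr (stc r str)).
rewrite (size_count_disjoint s_lr disj) !size_filter -cnt natrD.
by field.
Qed.

Lemma label_spec T n :
  [/\ (label T n).2 = n + size (keys T), keys (label T n).1 = iota n (size (keys T)),
      is_empty (label T n).1 = is_empty T & stable_rate (label T n).1 = stable_rate T].
Proof.
elim: T n => [|l IHl v r IHr] n /=; first by rewrite addn0.
case E1: (label l n) => [l' n1]; case E2: (label r n1.+1) => [r' n2] /=.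
move: (IHl n) (IHr n1.+1); rewrite E1 E2 /= => [[-> -> -> ->] [-> -> -> ->]].
by rewrite size_cat /= iotaD; split=> //; lia.
Qed.

Lemma bst_kr_tree k r : bst (kr_tree k r).
Proof.
rewrite /bst /kr_tree; have [_ -> _ _] := label_spec (kr_shape k r) 1.
by rewrite -sorted_pairwise ?iota_ltn_sorted //; exact: ltn_trans.
Qed.

Local Open Scope ring_scope.

Lemma two_pow_neq0 k : (2%:R ^+ k : rat) != 0.
Proof. by rewrite expf_neq0. Qed.

Lemma stable_rate_trunk m C :
  stable_rate (trunk m C) = 2%:R + stable_rate C - (1 + stable_rate C) / 2%:R ^+ m.
Proof.
elim: m => [|m IH] /=; first by rewrite expr0 divr1; field.
have -> : is_empty (trunk m C) = false by case: m {IH}.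
by rewrite /= IH exprS; field; rewrite two_pow_neq0.
Qed.

Lemma sum_nat_div_two_pow k :
  \sum_(1 <= j < k.+1) (j%:R / 2%:R ^+ j : rat) = 2%:R - (k + 2)%:R / 2%:R ^+ k.
Proof.
elim: k => [|k IH]; first by rewrite big_geq // expr0 divr1 subrr.
by rewrite big_nat_recr //= IH exprS !natrD; field; rewrite two_pow_neq0.
Qed.

Lemma beta_closed k : beta k = 2%:R - 1 / 2%:R ^+ k.
Proof.
by rewrite /beta sum_nat_div_two_pow -addn1 !natrD; field; rewrite two_pow_neq0.
Qed.

Lemma stable_rate_kr_shape k r : (0 < k)%N ->
  stable_rate (kr_shape k r) = 2%:R ^+ k * beta k * (1 - alpha k ^+ r) + alpha k ^+ r.
Proof.
case: k => [|k] // _; elim: r => [|r IH]; first by rewrite /= expr0 subrr mulr0 add0r.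
rewrite [kr_shape _ _]/= /=; have -> : is_empty (kr_shape k.+1 r) = false by case: r {IH}.
rewrite /= stable_rate_trunk IH beta_closed /alpha exprS [in X in _ = X]exprS.
by field; rewrite two_pow_neq0.
Qed.

Local Close Scope ring_scope.

Theorem lemma9 (k r : nat) (X : seq nat) :
  2 <= k ->
  strongly_stable (kr_tree k r) X ->
  whole_multiple_of_atomic (kr_tree k r) X ->
  gf_avg_cost (kr_tree k r) X =
  (2%:R ^+ k * beta k * (1 - alpha k ^+ r) + alpha k ^+ r)%R.
Proof.
move=> k2 /andP [/allP leaves st] [A [n [[A0 repA _] n0 EX]]].
have XT : {subset X <= keys (kr_tree k r)} by move=> y /leaves /mem_leaf_keys.
have stXX : nodes_stable (kr_tree k r) (X ++ X).
  have /repA /andP [_] : 0 < n + n by rewrite addn_gt0 n0.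
  by rewrite /repeat_seq nseqD flatten_cat -/(repeat_seq n A) -EX.
have X0 : 0 < size X.
  by rewrite EX; case: n n0 {EX} => // n _; rewrite size_cat (leq_trans A0) ?leq_addr.
have [_ _ _ rate_label] := label_spec (kr_shape k r) 1.
rewrite /gf_avg_cost gf_total_stable ?bst_kr_tree // static_cost_periodic ?bst_kr_tree //.
rewrite rate_label stable_rate_kr_shape; last by apply: leq_trans k2.
by rewrite [X in (X / _)%R]mulrC mulfK // pnatr_eq0 -lt0n.
Qed.
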